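(* Let $n\ge 1$ and let $\mathcal C\subset M_n(\mathbb{F}_2)$ be an additively closed set of $n\times n$ matrices over $\mathbb{F}_2$ (identified with $\mathbb{F}_2$-linear maps $\mathbb{F}_2^n\to\mathbb{F}_2^n$) such that $|\mathcal C|=2^{2n}$ and $\mathrm{rank}(A)\ge n-1$ for all $0\ne A\in\mathcal C$. Then there exist two presemifields $(\mathbb{F}_2^n,\star)$ and $(\mathbb{F}_2^n,\circ)$ such that \[ \mathcal C=\{x\mapsto a\star x-b\circ x \;:\; a,b\in\mathbb{F}_2^n\}. \] In particular, $\mathcal C$ contains an additively closed set $\mathcal C'$ with $|\mathcal C'|=2^n$ all of whose nonzero elements are invertible.
   Context: A presemifield $(\mathbb{F}_q^n,\circ)$ is the vector space $\mathbb{F}_q^n$ equipped with a multiplication $\circ$ that is biadditive (distributive on both sides, not necessarily associative, no identity required) and has no zero divisors: $x\circ y=0$ implies $x=0$ or $y=0$. Equivalently, it is a finite-dimensional (not necessarily associative) division algebra over a finite field. For a presemifield, the set $\{x\mapsto x\circ y: y\in\mathbb{F}_q^n\}$ is an additive set of $q^n$ matrices in $M_n(\mathbb{F}_q)$ all of whose nonzero elements are invertible (a semifield spread set). In the terminology of rank-metric codes, $\mathcal C$ in the claim is an additive maximum rank distance (MRD) code with minimum distance $n-1$. *)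

From HB Require Import structures.
From mathcomp Require Import all_boot all_order all_algebra.
Set Implicit Arguments. Unset Strict Implicit. Unset Printing Implicit Defensive.
Import GRing.Theory.
Local Open Scope ring_scope.

(* Vectors of F_2^n are row vectors 'rV['F_2]_n; a matrix A : 'M['F_2]_n is
   identified with the linear map x |-> x *m A. *)

Definition presemifield (n : nat) (mul : 'rV['F_2]_n -> 'rV['F_2]_n -> 'rV['F_2]_n) : Prop :=
  [/\ (forall a x y, mul a (x + y) = mul a x + mul a y),
      (forall a b x, mul (a + b) x = mul a x + mul b x)
    & (forall a x, mul a x = 0 -> a = 0 \/ x = 0)].

Definition add_closed_set (n : nat) (C : {set 'M['F_2]_n}) : Prop :=
  forall A B, A \in C -> B \in C -> A + B \in C.

(* Nonzero elements of C have rank >= n - 1, so an element of C vanishing on two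
   independent vectors x, z is 0 and A |-> (xA, zA) is a bijection from C onto
   F_2^n x F_2^n.  Hence, for x, v nonzero, the fiber {A in C | xA = v} has 2^n
   elements, 2^n - 2 of which are singular: one with kernel z for each z outside
   {0, x}.  The two remaining, invertible, elements of the fiber add up to the sum
   of the singular ones, which is additive and nonzero in v.  It follows that
   "A = B or A + B is invertible" is an equivalence relation on the invertible
   elements of C; each class together with 0 is an additively closed spread set of
   size 2^n, and two inequivalent classes S, T give C = S + T.  Finally a spread set
   S of size 2^n, parametrised by its values at a fixed e <> 0, is the set of right
   multiplications of a presemifield. *)

From HB Require Import structures.
From mathcomp Require Import all_boot all_order all_algebra zify.
Set Implicit Arguments. Unset Strict Implicit. Unset Printing Implicit Defensive.
Import GRing.Theory.
Local Open Scope ring_scope.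

Section CharTwo.
Variable V : lmodType 'F_2.

Lemma oppv_F2 (v : V) : - v = v.
Proof. by rewrite -scaleN1r oppr_pchar2 ?scale1r // pchar_Fp. Qed.

Lemma addvv_F2 (v : V) : v + v = 0.
Proof. by rewrite -{2}[v]oppv_F2 subrr. Qed.

Lemma addv_eq0_F2 (v w : V) : (v + w == 0) = (v == w).
Proof. by rewrite -{1}[w]oppv_F2 subr_eq0. Qed.

Lemma mulrn_expn_F2 (v : V) k : (0 < k)%N -> v *+ 2 ^ k = 0.
Proof. by case: k => // k _; rewrite expnSr mulrnA mulr2n addvv_F2. Qed.

End CharTwo.

Lemma neq0_F2 (a : 'F_2) : a != 0 -> a = 1.
Proof. by case: a => [[|[|]]] // ? _; apply: val_inj. Qed.

Lemma card_rV_F2 k : #|{: 'rV['F_2]_k}| = (2 ^ k)%N.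
Proof. by rewrite card_mx card_Fp // mul1n. Qed.

Lemma sum_rV_F2 k : (1 < k)%N -> \sum_(w : 'rV['F_2]_k) w = 0.
Proof.
move=> k_gt1; set s := \sum_(w : 'rV['F_2]_k) w.
apply/rowP => i; rewrite mxE.
have [j ji] : exists j : 'I_k, j != i.
  have [i0 | i_neq0] := eqVneq (val i) 0%N.
    by exists (Ordinal k_gt1); apply: contra_eqN i0 => /eqP <-.
  by exists (Ordinal (ltnW k_gt1)); apply: contraNneq i_neq0 => <-.
(* The transvection [w |-> w + w_i e_j] permutes the vectors and fixes the i-th coordinate. *)
pose f (w : 'rV['F_2]_k) := w + w 0 i *: delta_mx 0 j.
have fi w : f w 0 i = w 0 i by rewrite !mxE eq_sym (negbTE ji) mulr0 addr0.
have f_inv : involutive f by move=> w; rewrite /f fi -addrA addvv_F2 addr0.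
have : s = s + s 0 i *: delta_mx 0 j.
  rewrite {1}/s (reindex_inj (inv_inj f_inv)) big_split /= -scaler_suml.
  by rewrite -/s summxE.
by rewrite -[X in X = _]addr0 => /addrI/rowP/(_ j); rewrite !mxE !eqxx mulr1.
Qed.

Lemma card_imset2_inj (aT1 aT2 rT : finType) (f : aT1 -> aT2 -> rT)
    (A1 : {set aT1}) (A2 : {set aT2}) :
  {in setX A1 A2 &, injective (uncurry f)} ->
  #|[set f x y | x in A1, y in A2]| = (#|A1| * #|A2|)%N.
Proof. by move=> f_inj; rewrite curry_imset2X (card_in_imset f_inj) cardsX. Qed.

Lemma rowV_neq0_exists (F : fieldType) n : (0 < n)%N -> exists x : 'rV[F]_n, x != 0.
Proof.
case: n => // n _; exists (delta_mx 0 0).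
by apply/eqP => /matrixP/(_ 0 0)/eqP; rewrite !mxE !eqxx /= oner_eq0.
Qed.

Section UnitMatrices.
Variables (F : fieldType) (n : nat).
Implicit Types (A : 'M[F]_n) (x y : 'rV[F]_n).

Lemma mulmx_unit_eq0 A x : A \in unitmx -> (x *m A == 0) = (x == 0).
Proof. by rewrite -row_free_unit; apply: mulmx_free_eq0. Qed.

Lemma unitmxPn A : reflect (exists2 z : 'rV_n, z != 0 & z *m A = 0) (A \notin unitmx).
Proof.
apply: (iffP idP) => [|[z z_neq0 zA]]; last first.
  by apply: contra z_neq0 => /mulmx_unit_eq0 <-; rewrite zA.
rewrite -row_free_unit -kermx_eq0 => /rowV0Pn[z zK z_neq0].
by exists z => //; apply/eqP; rewrite -sub_kermx.
Qed.

Lemma ker_proportional A x y : (n.-1 <= \rank A)%N -> x != 0 ->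
  x *m A = 0 -> y *m A = 0 -> exists a, y = a *: x.
Proof.
move=> rkA x_neq0 /eqP; rewrite -sub_kermx => xK /eqP; rewrite -sub_kermx => yK.
have rk_x : \rank x = 1%N by apply/eqP; rewrite eqn_leq rank_leq_row lt0n mxrank_eq0.
have Kx : (kermx A <= x)%MS.
  rewrite -(mxrank_leqif_sup xK) eqn_leq mxrankS //= mxrank_ker rk_x leq_subLR; lia.
by apply/sub_rVP; apply: submx_trans yK Kx.
Qed.

End UnitMatrices.

Lemma ker_uniq_F2 n (A : 'M['F_2]_n) (x y : 'rV_n) : (n.-1 <= \rank A)%N ->
  x != 0 -> y != 0 -> x *m A = 0 -> y *m A = 0 -> x = y.
Proof.
move=> rkA x_neq0 y_neq0 xA yA; have [a y_ax] := ker_proportional rkA x_neq0 xA yA.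
by move: y_neq0; rewrite y_ax scaler_eq0 negb_or => /andP[/neq0_F2-> _]; rewrite scale1r.
Qed.

Section SpreadSet.
Variables (n : nat) (S : {set 'M['F_2]_n}).
Hypothesis S_add : add_closed_set S.
Hypothesis S_unit : forall A, A \in S -> A != 0 -> A \in unitmx.

Lemma spread_mul_inj (x : 'rV['F_2]_n) : x != 0 -> {in S &, injective (mulmx x)}.
Proof.
move=> x_neq0 A B AS BS /eqP; rewrite -addv_eq0_F2 -mulmxDr => /eqP xAB.
apply/eqP; rewrite -addv_eq0_F2; apply: (contraTT _ x_neq0) => AB_neq0.
by rewrite negbK -(mulmx_unit_eq0 _ (S_unit (S_add AS BS) AB_neq0)) xAB.
Qed.

Lemma card_spread_le (x : 'rV['F_2]_n) : x != 0 -> (#|S| <= 2 ^ n)%N.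
Proof.
by move=> x_neq0; rewrite -(card_in_imset (spread_mul_inj x_neq0)) -card_rV_F2 max_card.
Qed.

Hypothesis S_card : #|S| = (2 ^ n)%N.
Variable e : 'rV['F_2]_n.
Hypothesis e_neq0 : e != 0.

Lemma spread_mul_onto a : exists2 s, s \in S & e *m s = a.
Proof.
have onto : mulmx e @: S = setT.
  apply/eqP; rewrite eqEcard subsetT cardsT card_rV_F2.
  by rewrite (card_in_imset (spread_mul_inj e_neq0)) S_card leqnn.
have /imsetP[s sS ->] : a \in mulmx e @: S by rewrite onto inE.
by exists s.
Qed.

Definition spread_elt a := odflt 0 [pick s in S | e *m s == a].

Lemma spread_eltP a : spread_elt a \in S /\ e *m spread_elt a = a.
Proof.
rewrite /spread_elt; case: pickP => [s /andP[sS /eqP] // | no_s].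
by have [s sS es] := spread_mul_onto a; move: (no_s s); rewrite sS es eqxx.
Qed.

Lemma spread_eltK s : s \in S -> spread_elt (e *m s) = s.
Proof.
have [eltS e_elt] := spread_eltP (e *m s).
by move=> sS; apply: (spread_mul_inj e_neq0).
Qed.

Lemma spread_eltD a b : spread_elt (a + b) = spread_elt a + spread_elt b.
Proof.
have [aS e_a] := spread_eltP a; have [bS e_b] := spread_eltP b.
by have := spread_eltK (S_add aS bS); rewrite mulmxDr e_a e_b.
Qed.

Lemma spread_presemifield : presemifield (fun a x => x *m spread_elt a).
Proof.
split=> [a x y | a b x | a x]; first exact: mulmxDl.
  by rewrite spread_eltD mulmxDr.
have [aS e_a] := spread_eltP a.
have [elt0 | elt_neq0] := eqVneq (spread_elt a) 0; first by left; rewrite -e_a elt0 mulmx0.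
by move/eqP; rewrite mulmx_unit_eq0 ?S_unit // => /eqP; right.
Qed.

End SpreadSet.

Section MRDCode.
Variables (n : nat) (C : {set 'M['F_2]_n}).
Hypothesis C_add : add_closed_set C.
Hypothesis C_card : #|C| = (2 ^ (2 * n))%N.
Hypothesis C_rank : forall A, A \in C -> A != 0 -> (n.-1 <= \rank A)%N.

Local Notation V := 'rV['F_2]_n.
Local Notation M := 'M['F_2]_n.
Implicit Types (x z v w : V) (A B D P Q : M).

Variable e : V.
Hypothesis e_neq0 : e != 0.

Lemma mx0_C : 0 \in C.
Proof.
have /card_gt0P[A A_C] : (0 < #|C|)%N by rewrite C_card expn_gt0.
by rewrite -(addvv_F2 A); apply: C_add.
Qed.

Lemma n_gt1 : (1 < n)%N.
Proof.
have : (1 < 2 ^ n)%N by rewrite -card_rV_F2; apply/card_gt1P; exists e, 0.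
have : (#|C| <= #|{: M}|)%N by apply: max_card.
by rewrite C_card card_mx card_Fp // leq_exp2l //; case: n => [|[|]].
Qed.

(* For x <> 0, the vectors z such that x and z are linearly independent. *)
Definition indep x := [set z | (z != 0) && (z != x)].

Lemma card_indep x : x != 0 -> #|indep x| = (2 ^ n - 2)%N.
Proof.
move=> x_neq0; have -> : indep x = ~: [set 0; x] by apply/setP => z; rewrite !inE negb_or.
by have := cardsC [set 0; x]; rewrite cards2 eq_sym x_neq0 card_rV_F2 => <-; rewrite addKn.
Qed.

Lemma indep_neq0 x : x != 0 -> indep x != set0.
Proof.
move=> x_neq0; rewrite -card_gt0 card_indep // subn_gt0.
by rewrite -[2%N]/(2 ^ 1)%N ltn_exp2l // n_gt1.
Qed.

(* A + B kills x and z, so its kernel has dimension 2, against the rank bound. *)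
Lemma mulmx2_inj x z A B : x != 0 -> z \in indep x -> A \in C -> B \in C ->
  x *m A = x *m B -> z *m A = z *m B -> A = B.
Proof.
rewrite inE => x_neq0 /andP[z_neq0 zx] A_C B_C xAB zAB.
have kerAB (y : V) : y *m A = y *m B -> y *m (A + B) = 0.
  by move=> yAB; rewrite mulmxDr yAB addvv_F2.
apply/eqP; rewrite -addv_eq0_F2; apply: (contraTT _ zx) => AB_neq0.
have rkAB := C_rank (C_add A_C B_C) AB_neq0.
by rewrite negbK (ker_uniq_F2 rkAB z_neq0 x_neq0 (kerAB _ zAB) (kerAB _ xAB)) eqxx.
Qed.

Lemma mulmx2_onto x z v w : x != 0 -> z \in indep x ->
  exists2 A, A \in C & x *m A = v /\ z *m A = w.
Proof.
move=> x_neq0 zx; pose f A := (x *m A, z *m A).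
have f_inj : {in C &, injective f}.
  by move=> A B A_C B_C [] xAB zAB; apply: (mulmx2_inj x_neq0 zx).
have onto : f @: C = setT.
  apply/eqP; rewrite eqEcard subsetT cardsT card_in_imset // C_card.
  by rewrite card_prod card_rV_F2 -expnD addnn mul2n leqnn.
have /imsetP[A A_C [-> ->]] : (v, w) \in f @: C by rewrite onto inE.
by exists A.
Qed.

Definition fiber x v := [set A in C | x *m A == v].
Definition unit_fiber x v := [set A in fiber x v | A \in unitmx].

Lemma fiber_mul_bij x z v : x != 0 -> z \in indep x ->
  {in fiber x v &, injective (mulmx z)} /\ mulmx z @: fiber x v = setT.
Proof.
move=> x_neq0 zx; split.
  move=> A B; rewrite !inE => /andP[A_C /eqP xA] /andP[B_C /eqP xB].
  by apply: (mulmx2_inj x_neq0 zx) => //; rewrite xA xB.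
apply/setP => w; rewrite inE; have [A A_C [xA zA]] := mulmx2_onto v w x_neq0 zx.
by apply/imsetP; exists A; rewrite // inE A_C xA eqxx.
Qed.

Lemma card_fiber x v : x != 0 -> #|fiber x v| = (2 ^ n)%N.
Proof.
move=> x_neq0; have /set0Pn[z zx] := indep_neq0 x_neq0.
have [z_inj z_onto] := fiber_mul_bij v x_neq0 zx.
by rewrite -(card_in_imset z_inj) z_onto cardsT card_rV_F2.
Qed.

Lemma sum_fiber x v : x != 0 -> \sum_(A in fiber x v) A = 0.
Proof.
move=> x_neq0; set F := \sum_(A in fiber x v) A.
have F_C : F \in C.
  apply: (big_ind (fun A => A \in C)); [exact: mx0_C | exact: C_add |].
  by move=> A; rewrite inE => /andP[].
have /set0Pn[z zx] := indep_neq0 x_neq0.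
apply: (mulmx2_inj x_neq0 zx F_C mx0_C); rewrite mulmx0 mulmx_sumr.
  rewrite (eq_bigr (fun _ => v)) => [|A]; last by rewrite inE => /andP[_ /eqP].
  by rewrite sumr_const card_fiber // mulrn_expn_F2 // ltnW // n_gt1.
have [z_inj z_onto] := fiber_mul_bij v x_neq0 zx.
rewrite -(big_imset id z_inj) z_onto /=.
by rewrite (eq_bigl xpredT) ?sum_rV_F2 ?n_gt1 // => w; rewrite inE.
Qed.

Definition sing x z v := odflt 0 [pick A in C | (x *m A == v) && (z *m A == 0)].

Lemma singP x z v : x != 0 -> z \in indep x ->
  [/\ sing x z v \in C, x *m sing x z v = v & z *m sing x z v = 0].
Proof.
move=> x_neq0 zx; rewrite /sing; case: pickP => [A /and3P[A_C /eqP xA /eqP zA] // | no_A].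
by have [A A_C [xA zA]] := mulmx2_onto v 0 x_neq0 zx; move: (no_A A); rewrite A_C xA zA !eqxx.
Qed.

Lemma sing_uniq x z v A : x != 0 -> z \in indep x -> A \in C ->
  x *m A = v -> z *m A = 0 -> sing x z v = A.
Proof.
move=> x_neq0 zx A_C xA zA; have [singC x_sing z_sing] := singP v x_neq0 zx.
by apply: (mulmx2_inj x_neq0 zx) => //; rewrite ?x_sing ?z_sing.
Qed.

Lemma singD x z v w : x != 0 -> z \in indep x ->
  sing x z (v + w) = sing x z v + sing x z w.
Proof.
move=> x_neq0 zx; have [vC xv zv] := singP v x_neq0 zx; have [wC xw zw] := singP w x_neq0 zx.
by apply: sing_uniq; rewrite ?C_add // mulmxDr ?xv ?xw // zv zw addr0.
Qed.

Lemma sing_inj x v : x != 0 -> v != 0 -> {in indep x &, injective (sing x ^~ v)}.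
Proof.
move=> x_neq0 v_neq0 z z' zx z'x /= eq_sing.
have [singC x_sing z_sing] := singP v x_neq0 zx; have [_ _ z'_sing] := singP v x_neq0 z'x.
move: zx z'x; rewrite !inE => /andP[z_neq0 _] /andP[z'_neq0 _].
have sing_neq0 : sing x z v != 0 by apply: contraNneq v_neq0 => s0; rewrite -x_sing s0 mulmx0.
by apply: (ker_uniq_F2 (C_rank singC sing_neq0) z_neq0 z'_neq0 z_sing); rewrite eq_sing.
Qed.

Lemma nonunit_fiber x v : x != 0 -> v != 0 ->
  [set A in fiber x v | A \notin unitmx] = (sing x ^~ v) @: indep x.
Proof.
move=> x_neq0 v_neq0; apply/setP => A; apply/idP/imsetP.
  rewrite !inE => /andP[/andP[A_C /eqP xA] /unitmxPn[z z_neq0 zA]].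
  have zx : z \in indep x by rewrite inE z_neq0; apply: contraNneq v_neq0 => zx; rewrite -xA -zx zA.
  by exists z; rewrite // (sing_uniq x_neq0 zx A_C xA zA).
case=> z zx ->; have [singC x_sing z_sing] := singP v x_neq0 zx.
rewrite !inE singC x_sing eqxx; apply/unitmxPn; exists z => //.
by move: zx; rewrite inE => /andP[].
Qed.

Lemma card_unit_fiber x v : x != 0 -> v != 0 -> #|unit_fiber x v| = 2%N.
Proof.
move=> x_neq0 v_neq0; have := cardsID [set A : M | A \in unitmx] (fiber x v).
have -> : fiber x v :\: [set A : M | A \in unitmx] = [set A in fiber x v | A \notin unitmx].
  by apply/setP => A; rewrite !inE andbC.
rewrite nonunit_fiber // card_in_imset ?card_indep ?card_fiber //; last exact: sing_inj.
have -> : fiber x v :&: [set A : M | A \in unitmx] = unit_fiber x v.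
  by apply/setP => A; rewrite !inE.
have two_le : (2 <= 2 ^ n)%N by rewrite -[2%N]/(2 ^ 1)%N leq_exp2l // ltnW // n_gt1.
by move/(canRL (addnK _)) => ->; rewrite subKn.
Qed.

Lemma unit_fiber_neq0 x v A : x != 0 -> A \in unit_fiber x v -> v != 0.
Proof. by rewrite !inE => x_neq0 /andP[/andP[_ /eqP <-] uA]; rewrite mulmx_unit_eq0. Qed.

Lemma unit_fiberE x v P Q : x != 0 -> P \in unit_fiber x v -> Q \in unit_fiber x v ->
  P != Q -> unit_fiber x v = [set P; Q].
Proof.
move=> x_neq0 Pu Qu PQ; have v_neq0 := unit_fiber_neq0 x_neq0 Pu.
apply/eqP; rewrite eq_sym eqEcard cards2 PQ card_unit_fiber // leqnn andbT.
by apply/subsetP => A /set2P[] ->.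
Qed.

Definition sing_sum x v := \sum_(z in indep x) sing x z v.

Lemma sing_sumD x v w : x != 0 -> sing_sum x (v + w) = sing_sum x v + sing_sum x w.
Proof. by move=> x_neq0; rewrite -big_split; apply: eq_bigr => z zx; apply: singD. Qed.

Lemma sum_unit_fiber x v : x != 0 -> v != 0 -> \sum_(A in unit_fiber x v) A = sing_sum x v.
Proof.
move=> x_neq0 v_neq0; have := sum_fiber v x_neq0; rewrite (bigID (mem unitmx)) /=.
have -> : \sum_(A in fiber x v | A \in unitmx) A = \sum_(A in unit_fiber x v) A.
  by apply: eq_bigl => A; rewrite !inE.
have -> : \sum_(A in fiber x v | A \notin unitmx) A
        = \sum_(A in [set A in fiber x v | A \notin unitmx]) A.
  by apply: eq_bigl => A; rewrite !inE.
rewrite nonunit_fiber // big_imset /=; last exact: sing_inj.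
by move/eqP; rewrite addv_eq0_F2 => /eqP.
Qed.

Lemma unit_fiber_pair x v P Q : x != 0 -> P \in unit_fiber x v -> Q \in unit_fiber x v ->
  P != Q -> P + Q = sing_sum x v.
Proof.
move=> x_neq0 Pu Qu PQ; have v_neq0 := unit_fiber_neq0 x_neq0 Pu.
rewrite -sum_unit_fiber // (unit_fiberE x_neq0 Pu Qu PQ) big_setU1 ?big_set1 //.
by rewrite inE.
Qed.

Lemma sing_sum_neq0 x v : x != 0 -> v != 0 -> sing_sum x v != 0.
Proof.
move=> x_neq0 v_neq0.
have /cards2P[P [Q [PQ uf]]] : #|unit_fiber x v| == 2%N by rewrite card_unit_fiber.
have Pu : P \in unit_fiber x v by rewrite uf !inE eqxx.
have Qu : Q \in unit_fiber x v by rewrite uf !inE eqxx orbT.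
by rewrite -(unit_fiber_pair x_neq0 Pu Qu PQ) addv_eq0_F2.
Qed.

Lemma sing_sum_inj x : x != 0 -> injective (sing_sum x).
Proof.
move=> x_neq0 v w eq_vw; apply/eqP; rewrite -addv_eq0_F2.
apply/negPn/negP => /(sing_sum_neq0 x_neq0).
by rewrite sing_sumD // eq_vw addvv_F2 eqxx.
Qed.

Definition Cunit := [set A in C | A \in unitmx].
Definition compat A B := (A == B) || (A + B \in unitmx).

Lemma compat_sym : symmetric compat.
Proof. by move=> A B; rewrite /compat eq_sym addrC. Qed.

Lemma compat_trans A B D : A \in Cunit -> B \in Cunit -> D \in Cunit ->
  compat A B -> compat B D -> compat A D.
Proof.
rewrite !inE => /andP[A_C uA] /andP[B_C uB] /andP[D_C uD].
case/predU1P => [-> // | uAB]; case/predU1P => [<- | uBD]; first by rewrite /compat uAB orbT.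
rewrite /compat; have [// | AD] := eqVneq A D; apply/unitmxPn => -[x x_neq0].
rewrite mulmxDr => /eqP; rewrite addv_eq0_F2 => /eqP xA_xD.
(* The units A + B, B + D of one fiber of x and A, D of another have the same sum A + D. *)
have AB_u : A + B \in unit_fiber x (x *m (A + B)) by rewrite !inE (C_add A_C B_C) eqxx uAB.
have BD_u : B + D \in unit_fiber x (x *m (A + B)).
  by rewrite !inE (C_add B_C D_C) uBD !mulmxDr xA_xD addrC eqxx.
have A_u : A \in unit_fiber x (x *m A) by rewrite !inE A_C eqxx.
have D_u : D \in unit_fiber x (x *m A) by rewrite !inE D_C xA_xD eqxx.
have AB_BD : A + B != B + D by rewrite [B + D]addrC (inj_eq (addIr B)).
have := unit_fiber_pair x_neq0 AB_u BD_u AB_BD.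
rewrite addrA -(addrA A) addvv_F2 addr0 (unit_fiber_pair x_neq0 A_u D_u AD).
move/(sing_sum_inj x_neq0); rewrite mulmxDr -{1}[x *m A]addr0 => /addrI/esym/eqP.
by rewrite mulmx_unit_eq0 // (negbTE x_neq0).
Qed.

Definition spread A := 0 |: [set B in Cunit | compat A B].

Lemma spread_subC A : spread A \subset C.
Proof. by apply/subsetP => B /setU1P[-> | ]; rewrite ?mx0_C // !inE => /andP[/andP[]]. Qed.

Lemma spread_unit A B : B \in spread A -> B != 0 -> B \in unitmx.
Proof. by case/setU1P => [-> | ]; rewrite ?eqxx // !inE => /andP[/andP[]]. Qed.

Lemma spread_add A : A \in Cunit -> add_closed_set (spread A).
Proof.
move=> uA B D /setU1P[-> | ]; first by rewrite add0r.
rewrite inE => /andP[uB AB] /setU1P[-> | ]; first by rewrite addr0 setU1r // inE uB.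
rewrite inE => /andP[uD AD]; have [-> | BD] := eqVneq B D; first by rewrite addvv_F2 setU11.
have : compat B D := compat_trans uB uA uD (etrans (compat_sym B A) AB) AD.
rewrite /compat (negbTE BD) /= => uBD.
have uBD' : B + D \in Cunit.
  by move: uB uD; rewrite !inE uBD => /andP[B_C _] /andP[D_C _]; rewrite C_add.
apply: setU1r; rewrite in_set uBD' /=; apply: (compat_trans uA uB uBD' AB).
rewrite /compat addrA addvv_F2 add0r.
by move: uD; rewrite inE => /andP[_ ->]; rewrite orbT.
Qed.

Lemma card_Cunit x : x != 0 -> #|Cunit| = (2 * (2 ^ n - 1))%N.
Proof.
move=> x_neq0; rewrite -sum1_card (partition_big (mulmx x) predT) //=.
rewrite (eq_bigr (fun v => #|unit_fiber x v|)) => [|v _]; last first.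
  by rewrite -sum1_card; apply: eq_bigl => A; rewrite !inE andbAC.
rewrite (bigD1 0) //= (_ : #|unit_fiber x 0| = 0%N) ?add0n; last first.
  by apply: eq_card0 => A; apply/negP => /(unit_fiber_neq0 x_neq0); rewrite eqxx.
rewrite (eq_bigr (fun _ => 2%N)) => [|v v_neq0]; last exact: card_unit_fiber.
rewrite sum_nat_cond_const mulnC; congr (_ * _)%N.
by rewrite subn1 -(card_rV_F2 n) -(cardsC1 (0 : V)); apply: eq_card => v; rewrite !inE.
Qed.

(* Sending B to a kernel vector of A + B is injective, as each unit fiber has only two elements. *)
Lemma card_incompat_le A : A \in Cunit ->
  (#|[set B in Cunit | ~~ compat A B]| <= 2 ^ n - 1)%N.
Proof.
move=> uA; pose kv (N : M) := odflt 0 [pick z : V | (z != 0) && (z *m N == 0)].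
have kvP (N : M) : N \notin unitmx -> kv N != 0 /\ kv N *m N = 0.
  rewrite /kv; case: pickP => [z /andP[z_neq0 /eqP] // | no_z /unitmxPn[z z_neq0 zN]].
  by move: (no_z z); rewrite z_neq0 zN eqxx.
have kv_fiber B : B \in [set B in Cunit | ~~ compat A B] ->
    kv (A + B) != 0 /\ unit_fiber (kv (A + B)) (kv (A + B) *m A) = [set A; B].
  rewrite !inE negb_or => /andP[/andP[B_C uB] /andP[AB nuAB]].
  have [z_neq0 zAB] := kvP _ nuAB; split => //; apply: unit_fiberE => //.
    by move: uA; rewrite !inE eqxx andbT.
  move/eqP: zAB; rewrite mulmxDr addv_eq0_F2 => /eqP zA_zB.
  by rewrite !inE B_C uB zA_zB eqxx.
have kv_inj : {in [set B in Cunit | ~~ compat A B] &, injective (fun B => kv (A + B))}.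
  move=> B D HB HD /= eq_kv; have [_ EB] := kv_fiber B HB; have [_ ED] := kv_fiber D HD.
  have : D \in [set A; B] by rewrite -EB eq_kv ED set22.
  by case/set2P => [DA | //]; move: HD; rewrite inE DA /compat eqxx andbF.
rewrite -(card_in_imset kv_inj) subn1 -(card_rV_F2 n) -(cardsC1 (0 : V)).
apply: subset_leq_card; apply/subsetP => _ /imsetP[B HB ->].
by rewrite !inE; have [] := kv_fiber B HB.
Qed.

Lemma card_spread A : A \in Cunit -> #|spread A| = (2 ^ n)%N.
Proof.
move=> uA; apply/eqP; rewrite eqn_leq (card_spread_le (spread_add uA) (@spread_unit A) e_neq0) /=.
have nu0 : (0 : M) \notin unitmx by apply/unitmxPn; exists e; rewrite ?mulmx0.
rewrite cardsU1 !inE (negbTE nu0) andbF /=.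
have := cardsID [set B | compat A B] Cunit; rewrite (card_Cunit e_neq0).
have -> : Cunit :&: [set B | compat A B] = [set B in Cunit | compat A B].
  by apply/setP => B; rewrite !inE.
have -> : Cunit :\: [set B | compat A B] = [set B in Cunit | ~~ compat A B].
  by apply/setP => B; rewrite !inE andbC.
set c := #|[set B in Cunit | compat A B]|; set i := #|[set B in Cunit | ~~ compat A B]|.
have : (i <= 2 ^ n - 1)%N := card_incompat_le uA.
have : (0 < 2 ^ n)%N by rewrite expn_gt0.
move: (2 ^ n)%N => N; lia.
Qed.

Lemma exists_incompat : exists P Q, [/\ P \in Cunit, Q \in Cunit & ~~ compat P Q].
Proof.
have /cards2P[P [Q [PQ uf]]] : #|unit_fiber e e| == 2%N by rewrite card_unit_fiber.
have : P \in unit_fiber e e by rewrite uf set21.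
have : Q \in unit_fiber e e by rewrite uf set22.
rewrite !inE => /andP[/andP[Q_C /eqP eQ] uQ] /andP[/andP[P_C /eqP eP] uP].
exists P, Q; rewrite !inE P_C Q_C uP uQ /compat (negbTE PQ); split => //.
by apply/unitmxPn; exists e; rewrite // mulmxDr eP eQ addvv_F2.
Qed.

Lemma spread_sum P Q : P \in Cunit -> Q \in Cunit -> ~~ compat P Q ->
  C = [set s + t | s in spread P, t in spread Q].
Proof.
move=> uP uQ PQ.
have spread_cap B : B \in spread P -> B \in spread Q -> B = 0.
  case/setU1P=> [// | ]; rewrite inE => /andP[uB PB] /setU1P[// | ].
  rewrite inE => /andP[_ QB].
  by rewrite (compat_trans uP uB uQ PB (etrans (compat_sym B Q) QB)) in PQ.
have sum_inj : {in setX (spread P) (spread Q) &, injective (uncurry (fun s t : M => s + t))}.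
  move=> [s t] [s' t']; rewrite !in_setX /= => /andP[sP tQ] /andP[s'P t'Q] eq_st.
  have ss' : s + s' = t + t' by apply/eqP; rewrite -addv_eq0_F2 addrACA eq_st addvv_F2.
  have sP' := spread_add uP sP s'P; have tQ' := spread_add uQ tQ t'Q.
  have st0 : s + s' = 0 by apply: spread_cap sP' _; rewrite ss'.
  move/eqP: (st0); rewrite addv_eq0_F2 => /eqP <-.
  by move/eqP: st0; rewrite ss' addv_eq0_F2 => /eqP <-.
apply/eqP; rewrite eq_sym eqEcard; apply/andP; split.
  apply/subsetP => _ /imset2P[s t sP tQ ->].
  exact: C_add (subsetP (spread_subC P) _ sP) (subsetP (spread_subC Q) _ tQ).
rewrite C_card (card_imset2_inj sum_inj) mul2n -addnn expnD.
by apply: leq_mul; [rewrite (card_spread uP) | rewrite (card_spread uQ)]; apply: leqnn.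
Qed.

Definition spread_prod A a x := x *m spread_elt (spread A) e a.

Lemma spread_prod_presemifield A : A \in Cunit -> presemifield (spread_prod A).
Proof.
move=> uA; exact (spread_presemifield (spread_add uA) (@spread_unit A) (card_spread uA) e_neq0).
Qed.

Lemma mem_C_spread_prod P Q : P \in Cunit -> Q \in Cunit -> ~~ compat P Q ->
  forall N, N \in C <-> exists a b, forall x, x *m N = spread_prod P a x - spread_prod Q b x.
Proof.
move=> uP uQ PQ N.
have eltK A (s : M) : A \in Cunit -> s \in spread A -> spread_elt (spread A) e (e *m s) = s.
  move=> uA sA; exact (spread_eltK (spread_add uA) (@spread_unit A) (card_spread uA) e_neq0 sA).
have elt_in A a : A \in Cunit -> spread_elt (spread A) e a \in spread A.
  by move=> uA; case: (spread_eltP (spread_add uA) (@spread_unit A) (card_spread uA) e_neq0 a).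
rewrite (spread_sum uP uQ PQ) /spread_prod; split => [/imset2P[s t sP tQ ->] | [a [b ab]]].
  exists (e *m s), (e *m t) => x; rewrite oppv_F2 mulmxDr.
  (* Rewriting both sides at once would unfold [spread P] against [spread Q]. *)
  by congr (_ + _); [rewrite (eltK P s uP sP) | rewrite (eltK Q t uQ tQ)].
apply/imset2P; exists (spread_elt (spread P) e a) (spread_elt (spread Q) e b).
- exact: elt_in P a uP.
- exact: elt_in Q b uQ.
- by apply/row_matrixP => i; rewrite !rowE ab oppv_F2 mulmxDr.
Qed.

End MRDCode.

Theorem mainTheorem1 (n : nat) (C : {set 'M['F_2]_n}) :
  (0 < n)%N ->
  add_closed_set C ->
  #|C| = (2 ^ (2 * n))%N ->
  (forall A, A \in C -> A != 0 -> (n.-1 <= \rank A)%N) ->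
  (exists (star circ : 'rV['F_2]_n -> 'rV['F_2]_n -> 'rV['F_2]_n),
      [/\ presemifield star, presemifield circ &
          forall A : 'M['F_2]_n,
            A \in C <-> exists a b, forall x, x *m A = star a x - circ b x])
  /\
  (exists C' : {set 'M['F_2]_n},
      [/\ C' \subset C, add_closed_set C', #|C'| = (2 ^ n)%N &
          forall A, A \in C' -> A != 0 -> A \in unitmx]).
Proof.
move=> n_gt0 C_add C_card C_rank; have [e e_neq0] := rowV_neq0_exists 'F_2 n_gt0.
have [P [Q [uP uQ PQ]]] := exists_incompat C_add C_card C_rank e_neq0.
split.
  exists (spread_prod C e P), (spread_prod C e Q); split.
  - exact (spread_prod_presemifield C_add C_card C_rank e_neq0 uP).
  - exact (spread_prod_presemifield C_add C_card C_rank e_neq0 uQ).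
  - exact (mem_C_spread_prod C_add C_card C_rank e_neq0 uP uQ PQ).
exists (spread C P); split.
- exact (spread_subC C_add C_card P).
- exact (spread_add C_add C_card C_rank e_neq0 uP).
- exact (card_spread C_add C_card C_rank e_neq0 uP).
- exact: spread_unit.
Qed.
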